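(* Let $\Pi$ be a finite ground disjunctive logic program (viewed as a set of propositional formulas) that has at least one equilibrium model (answer set), and let $V\subseteq V(\Pi)$. Then there is a finite disjunctive program $\Pi'$ with $V(\Pi')\subseteq V$ such that $\Pi\mathbin{|\!\sim}\psi$ for every $\psi\in\Pi'$, and for every formula $\varphi$ that is a conjunction of literals over $V$, if $\Pi\mathbin{|\!\sim}\varphi$ then $\Pi'\mathbin{|\!\sim}\varphi$.
   Context: A ground disjunctive rule $K_1\lor\dots\lor K_k\leftarrow L_1,\dots,L_m,not\,L_{m+1},\dots,not\,L_n$ (all $K_j,L_i$ atoms) is identified with the propositional formula $L_1\land\dots\land L_m\land\neg L_{m+1}\land\dots\land\neg L_n\to K_1\lor\dots\lor K_k$; a disjunctive program is a finite set of such rules. A literal is an atom $a$ or its negation $\neg a$. $V(\cdot)$ is the set of atoms occurring. Here-and-there logic $\mathbf{HT}(W)$ over atom set $W$: interpretations are pairs $\langle H,T\rangle$, $H\subseteq T\subseteq W$, viewed as two-world Kripke models ($h\le t$; atoms true at $h$: $H$, at $t$: $T$) with intuitionistic Kripke clauses, $\neg\varphi:=\varphi\to\bot$; $\mathcal M\models\varphi$ iff $\varphi$ true at both worlds. An equilibrium model of $\Pi$ over $W$ is a model $\langle T,T\rangle$ of $\Pi$ with no model $\langle H,T\rangle$ of $\Pi$ with $H\subsetneq T$ (for disjunctive programs, $\langle T,T\rangle$ is an equilibrium model iff $T$ is an answer set). Entailment $\mathbin{|\!\sim}$ (closed-world): if $\Pi$ is non-empty and has equilibrium models, $\Pi\mathbin{|\!\sim}\varphi$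 iff every equilibrium model of $\Pi$ over $V(\Pi)\cup V(\varphi)$ satisfies $\varphi$; otherwise $\Pi\mathbin{|\!\sim}\varphi$ iff $\varphi$ holds in every $\mathbf{HT}$-model of $\Pi$. *)

From Stdlib Require Import List.
Import ListNotations.

Definition atom := nat.

Inductive form : Type :=
| FAtom : atom -> form
| FBot : form
| FAnd : form -> form -> form
| FOr : form -> form -> form
| FImp : form -> form -> form.

Definition FNeg (f : form) : form := FImp f FBot.
Definition FTop : form := FImp FBot FBot.

Fixpoint atoms (f : form) : list atom :=
  match f with
  | FAtom a => [a]
  | FBot => []
  | FAnd g h | FOr g h | FImp g h => atoms g ++ atoms h
  end.

Fixpoint sat_t (T : atom -> Prop) (f : form) : Prop :=
  match f with
  | FAtom a => T a
  | FBot => False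
  | FAnd g h => sat_t T g /\ sat_t T h
  | FOr g h => sat_t T g \/ sat_t T h
  | FImp g h => sat_t T g -> sat_t T h
  end.

(* Truth at the world h (atoms true there: H), h <= t; intuitionistic clause
   for implication quantifies over the worlds h and t. *)
Fixpoint sat_h (H T : atom -> Prop) (f : form) : Prop :=
  match f with
  | FAtom a => H a
  | FBot => False
  | FAnd g k => sat_h H T g /\ sat_h H T k
  | FOr g k => sat_h H T g \/ sat_h H T k
  | FImp g k => (sat_h H T g -> sat_h H T k) /\ (sat_t T g -> sat_t T k)
  end.

Definition ht_sat (H T : atom -> Prop) (f : form) : Prop :=
  sat_h H T f /\ sat_t T f.

Definition ht_interp (W : list atom) (H T : atom -> Prop) : Prop :=
  (forall a, H a -> T a) /\ (forall a, T a -> In a W).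

(* Ground disjunctive rules  K1 v ... v Kk <- L1,...,Lm, not L(m+1),...,not Ln *)
Record rule : Type := mkRule {
  head : list atom;
  pos : list atom;
  neg : list atom
}.

Definition program := list rule.

Definition big_and (l : list form) : form := fold_right FAnd FTop l.
Definition big_or (l : list form) : form := fold_right FOr FBot l.

Definition rule_form (r : rule) : form :=
  FImp (big_and (map FAtom (pos r) ++ map (fun a => FNeg (FAtom a)) (neg r)))
       (big_or (map FAtom (head r))).

Definition rule_atoms (r : rule) : list atom := head r ++ pos r ++ neg r.

Definition prog_atoms (P : program) : list atom := flat_map rule_atoms P.

Definition ht_model (P : program) (H T : atom -> Prop) : Prop :=
  forall r, In r P -> ht_sat H T (rule_form r).

Definition eq_model (P : program) (W : list atom) (T : atom -> Prop) : Prop :=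
  ht_interp W T T /\ ht_model P T T /\
  ~ (exists H : atom -> Prop,
        (forall a, H a -> T a) /\ (exists a, T a /\ ~ H a) /\ ht_model P H T).

Definition has_eq_model (P : program) (W : list atom) : Prop :=
  exists T, eq_model P W T.

(* Closed-world entailment P |~ phi, with W = V(P) u V(phi). *)
Definition entails (P : program) (f : form) : Prop :=
  let W := prog_atoms P ++ atoms f in
  (P <> [] /\ has_eq_model P W ->
     forall T, eq_model P W T -> ht_sat T T f) /\
  (~ (P <> [] /\ has_eq_model P W) ->
     forall H T, ht_interp W H T -> ht_model P H T -> ht_sat H T f).

Definition literal : Type := (atom * bool)%type. (* true = a, false = ~a *)

Definition lit_form (l : literal) : form :=
  if snd l then FAtom (fst l) else FNeg (FAtom (fst l)).

Fixpoint conj_lits (ls : list literal) : form :=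
  match ls with
  | [] => FTop
  | [l] => lit_form l
  | l :: ls' => FAnd (lit_form l) (conj_lits ls')
  end.

(* Let P' consist of the fact [a <-] for every atom a of V that is true in all
   answer sets of P, and of the constraint [<- a] for every atom a of V that is
   false in all of them.  Since P has an answer set, these literals are
   consistent, so P' has exactly one answer set, namely its set of facts.  A
   conjunction of literals over V is entailed by P iff each of its literals
   holds in all answer sets of P, i.e. iff each literal comes from a rule of
   P'; it is then true in the answer set of P', hence entailed by P'. *)
From Stdlib Require Import List Classical.
Import ListNotations.

Definition lit_true (T : atom -> Prop) (l : literal) : Prop :=
  if snd l then T (fst l) else ~ T (fst l).

Definition lit_rule (l : literal) : rule :=
  if snd l then mkRule [fst l] [] [] else mkRule [] [fst l] [].

Definition cautious_lit (P : program) (l : literal) : Prop :=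
  forall T, eq_model P (prog_atoms P) T -> lit_true T l.

Definition consistent_lits (Ls : list literal) : Prop :=
  forall a, In (a, true) Ls -> In (a, false) Ls -> False.

Lemma sat_h_diag (T : atom -> Prop) (f : form) : sat_h T T f <-> sat_t T f.
Proof.
  induction f; simpl; try tauto.
  all: rewrite IHf1, IHf2; tauto.
Qed.

Lemma ht_model_diag (P : program) (T : atom -> Prop) :
  ht_model P T T <-> forall r, In r P -> sat_t T (rule_form r).
Proof.
  unfold ht_model, ht_sat; split; intros H r Hr.
  - apply H, Hr.
  - split; [apply sat_h_diag|]; apply H, Hr.
Qed.

Lemma sat_t_lit_form (T : atom -> Prop) (l : literal) :
  sat_t T (lit_form l) <-> lit_true T l.
Proof. destruct l as [a []]; unfold lit_true; simpl; tauto. Qed.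

Lemma sat_t_conj_lits (T : atom -> Prop) (ls : list literal) :
  sat_t T (conj_lits ls) <-> forall l, In l ls -> lit_true T l.
Proof.
  induction ls as [|l [|l' ls] IH].
  - simpl; tauto.
  - change (conj_lits [l]) with (lit_form l); rewrite sat_t_lit_form.
    split; [intros H x [<-|[]]; exact H | intros H; apply H; left; reflexivity].
  - change (sat_t T (lit_form l) /\ sat_t T (conj_lits (l' :: ls)) <->
            forall x, In x (l :: l' :: ls) -> lit_true T x).
    rewrite sat_t_lit_form, IH; simpl.
    split; [intros [Hl Hls] x [<-|Hx]; auto | auto].
Qed.

Lemma atoms_lit_form (l : literal) : atoms (lit_form l) = [fst l].
Proof. destruct l as [a []]; reflexivity. Qed.

Lemma atoms_conj_lits (ls : list literal) :
  incl (atoms (conj_lits ls)) (map fst ls).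
Proof.
  induction ls as [|l [|l' ls] IH]; intros a Ha.
  - destruct Ha.
  - change (In a (atoms (lit_form l))) in Ha; rewrite atoms_lit_form in Ha.
    exact Ha.
  - change (In a (atoms (lit_form l) ++ atoms (conj_lits (l' :: ls)))) in Ha.
    rewrite atoms_lit_form in Ha; apply in_app_iff in Ha as [[<-|[]]|Ha].
    + left; reflexivity.
    + right; apply IH, Ha.
Qed.

Lemma sat_t_lit_rule (T : atom -> Prop) (l : literal) :
  sat_t T (rule_form (lit_rule l)) <-> lit_true T l.
Proof. destruct l as [a []]; unfold lit_true; simpl; tauto. Qed.

Lemma atoms_rule_form_lit_rule (l : literal) :
  atoms (rule_form (lit_rule l)) = [fst l].
Proof. destruct l as [a []]; reflexivity. Qed.

Lemma prog_atoms_lit_rules (Ls : list literal) :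
  prog_atoms (map lit_rule Ls) = map fst Ls.
Proof.
  induction Ls as [|[a []] Ls IH]; simpl; f_equal; exact IH.
Qed.

Lemma prog_atoms_nonempty (P : program) (a : atom) :
  In a (prog_atoms P) -> P <> [].
Proof. intros Ha ->; destruct Ha. Qed.

Lemma eq_model_ext (P : program) (W W' : list atom) (T : atom -> Prop) :
  (forall a, In a W <-> In a W') -> eq_model P W T -> eq_model P W' T.
Proof.
  intros HW [[HHT HTW] Hmin]; split; [split|]; auto.
  intros a Ha; apply HW; auto.
Qed.

(* Once P has an answer set over its own atoms, adding the atoms of f changes
   nothing, and entailment is truth in all answer sets. *)
Lemma entails_iff_eq_models (P : program) (f : form) :
  P <> [] -> has_eq_model P (prog_atoms P) -> incl (atoms f) (prog_atoms P) ->
  entails P f <-> forall T, eq_model P (prog_atoms P) T -> sat_t T f.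
Proof.
  intros HP [T0 HT0] Hf.
  assert (HW : forall a, In a (prog_atoms P) <-> In a (prog_atoms P ++ atoms f)).
  { intro a; rewrite in_app_iff; split; [auto | intros [Ha|Ha]; auto]. }
  assert (HWsym : forall a, In a (prog_atoms P ++ atoms f) <-> In a (prog_atoms P)).
  { intro a; symmetry; apply HW. }
  assert (Hcons : P <> [] /\ has_eq_model P (prog_atoms P ++ atoms f)).
  { split; [exact HP|]; exists T0; eapply eq_model_ext; eauto. }
  unfold entails; split.
  - intros [Hent _] T HT.
    apply (Hent Hcons T (eq_model_ext _ _ _ _ HW HT)).
  - intros Hall; split.
    + intros _ T HT; split; [apply sat_h_diag|]; apply Hall;
        eapply eq_model_ext; eauto.
    + intros Hn; contradiction.
Qed.

Lemma lit_rules_lit_true (Ls : list literal) (T : atom -> Prop) :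
  ht_model (map lit_rule Ls) T T -> forall l, In l Ls -> lit_true T l.
Proof.
  intros HT l Hl; apply sat_t_lit_rule.
  apply (proj1 (ht_model_diag _ _) HT), in_map, Hl.
Qed.

Lemma lit_rules_eq_model (Ls : list literal) :
  consistent_lits Ls ->
  eq_model (map lit_rule Ls) (map fst Ls) (fun a => In (a, true) Ls).
Proof.
  intros Hcons; split; [split|split].
  - auto.
  - intros a Ha; exact (in_map fst _ _ Ha).
  - apply ht_model_diag; intros r Hr.
    apply in_map_iff in Hr as [[a b] [<- Hl]]; apply sat_t_lit_rule.
    destruct b; simpl; [exact Hl | intros Ht; exact (Hcons a Ht Hl)].
  - intros [H [_ [[a [Ha Hna]] HH]]].
    destruct (HH (lit_rule (a, true)) (in_map _ _ _ Ha)) as [[Hh _] _].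
    simpl in Hh; apply Hna; tauto.
Qed.

Lemma entails_lit_rules_conj_lits (Ls ls : list literal) :
  consistent_lits Ls -> ls <> [] -> incl ls Ls ->
  entails (map lit_rule Ls) (conj_lits ls).
Proof.
  intros Hcons Hne Hincl.
  assert (Hatoms : incl (map fst ls) (prog_atoms (map lit_rule Ls))).
  { rewrite prog_atoms_lit_rules; intros a Ha.
    apply in_map_iff in Ha as [l [<- Hl]]; apply in_map, Hincl, Hl. }
  destruct ls as [|l ls]; [contradiction|].
  apply entails_iff_eq_models.
  - apply (prog_atoms_nonempty _ (fst l)), Hatoms; left; reflexivity.
  - exists (fun a => In (a, true) Ls).
    rewrite prog_atoms_lit_rules; apply lit_rules_eq_model, Hcons.
  - intros a Ha; apply Hatoms, atoms_conj_lits, Ha.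
  - intros T [_ [HT _]]; apply sat_t_conj_lits; intros x Hx.
    apply (lit_rules_lit_true Ls T HT), Hincl, Hx.
Qed.

Lemma entails_lit_rule_cautious (P : program) (l : literal) :
  has_eq_model P (prog_atoms P) -> In (fst l) (prog_atoms P) ->
  cautious_lit P l -> entails P (rule_form (lit_rule l)).
Proof.
  intros Hmodel Hl Hcaut; apply entails_iff_eq_models; auto.
  - apply (prog_atoms_nonempty _ _ Hl).
  - rewrite atoms_rule_form_lit_rule; intros a [<-|[]]; exact Hl.
  - intros T HT; apply sat_t_lit_rule, Hcaut, HT.
Qed.

Lemma cautious_lit_of_entails_conj_lits (P : program) (ls : list literal) :
  has_eq_model P (prog_atoms P) -> ls <> [] -> incl (map fst ls) (prog_atoms P) ->
  entails P (conj_lits ls) -> forall l, In l ls -> cautious_lit P l.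
Proof.
  intros Hmodel Hne Hatoms Hent l Hl T HT.
  destruct ls as [|l0 ls0]; [contradiction|].
  rewrite entails_iff_eq_models in Hent; auto.
  - exact (proj1 (sat_t_conj_lits T _) (Hent T HT) l Hl).
  - apply (prog_atoms_nonempty _ (fst l0)), Hatoms; left; reflexivity.
  - intros a Ha; apply Hatoms, atoms_conj_lits, Ha.
Qed.

Lemma cautious_lits_consistent (P : program) (a : atom) :
  has_eq_model P (prog_atoms P) ->
  cautious_lit P (a, true) -> cautious_lit P (a, false) -> False.
Proof. intros [T HT] Ht Hf; exact (Hf T HT (Ht T HT)). Qed.

Lemma exists_filter {A : Type} (p : A -> Prop) (xs : list A) :
  exists ys, forall x, In x ys <-> In x xs /\ p x.
Proof.
  induction xs as [|x xs [ys Hys]].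
  - exists []; simpl; tauto.
  - destruct (classic (p x)) as [Hx|Hx]; [exists (x :: ys) | exists ys];
      intro y; simpl; rewrite Hys; split.
    + intros [<-|Hy]; tauto.
    + tauto.
    + tauto.
    + intros [[<-|Hy] Hpy]; tauto.
Qed.

Lemma exists_lits_over (p : literal -> Prop) (V : list atom) :
  exists Ls, forall l, In l Ls <-> In (fst l) V /\ p l.
Proof.
  destruct (exists_filter p (list_prod V [true; false])) as [Ls HLs].
  exists Ls; intros [a b]; rewrite HLs.
  pose proof (in_prod_iff V [true; false] a b); simpl in *.
  destruct b; tauto.
Qed.

Theorem proposition7 (P : program) (V : list atom) :
  has_eq_model P (prog_atoms P) ->
  incl V (prog_atoms P) ->
  exists P' : program,
    incl (prog_atoms P') V /\
    (forall r, In r P' -> entails P (rule_form r)) /\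
    (forall ls : list literal,
        ls <> [] ->
        (forall l, In l ls -> In (fst l) V) ->
        entails P (conj_lits ls) -> entails P' (conj_lits ls)).
Proof.
  intros Hmodel HV.
  destruct (exists_lits_over (cautious_lit P) V) as [Ls HLs].
  exists (map lit_rule Ls); split; [|split].
  - rewrite prog_atoms_lit_rules; intros a Ha.
    apply in_map_iff in Ha as [l [<- Hl]]; apply HLs, Hl.
  - intros r Hr; apply in_map_iff in Hr as [l [<- Hl]].
    apply HLs in Hl as [HlV Hcaut].
    apply entails_lit_rule_cautious; auto.
  - intros ls Hne HlsV Hent.
    apply entails_lit_rules_conj_lits; auto.
    + intros a Ht Hf; apply HLs in Ht, Hf.
      exact (cautious_lits_consistent P a Hmodel (proj2 Ht) (proj2 Hf)).
    + intros l Hl; apply HLs; split; [auto|].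
      apply (cautious_lit_of_entails_conj_lits P ls); auto.
      intros a Ha; apply in_map_iff in Ha as [l' [<- Hl']]; auto.
Qed.
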